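(* Let $H,K$ be complex Hilbert spaces with $\dim H=n$, $\dim K=m$, and let $r$ be an integer with $1\le r\le n\le m$. Then there is an $r$-tuple $(v_1,\dots,v_r)$ of operators $v_k\in\mathcal B(H,K)$ with $v_1^*v_1+\cdots+v_r^*v_r=\mathbf 1_H$ such that the family of $r^2$ operators $\{v_i^*v_j:1\le i,j\le r\}$ is linearly independent in $\mathcal B(H)$. *)

(* Finite-dimensional complex Hilbert spaces H, K of dimensions
   n, m are identified with the column spaces C^n, C^m (standard inner product),
   over an arbitrary numeric algebraically closed field C (this includes the
   complex numbers). Operators in B(H,K) are m x n matrices. *)
From HB Require Import structures.
From mathcomp Require Import all_boot all_order all_algebra.
Set Implicit Arguments. Unset Strict Implicit. Unset Printing Implicit Defensive.
Import Order.TTheory GRing.Theory Num.Theory.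
Local Open Scope ring_scope.

Definition adjmx (C : numClosedFieldType) (m n : nat) (A : 'M[C]_(m, n)) : 'M[C]_(n, m) :=
  (map_mx Num.conj A)^T.

Definition mx_lin_indep (C : numClosedFieldType) (p q : nat) (I : finType)
  (F : I -> 'M[C]_(p, q)) : Prop :=
  forall c : I -> C, \sum_(i : I) c i *: F i = 0 -> forall i, c i = 0.

From HB Require Import structures.
From mathcomp Require Import all_boot all_order all_algebra.
Import Order.TTheory GRing.Theory Num.Theory.
Local Open Scope ring_scope.

(* Take v_k = E_{0,k} for k < r and add to v_0 the isometric embedding of the
   coordinates r, ..., n-1 of H into the same coordinates of K, away from the
   row 0 used by the E_{0,k}.  Then v_i^* v_j = E_{ij} + [i = j = 0] P with P
   the projection onto the coordinates >= r, so the v_k^* v_k sum to the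
   identity, and the (i, j) entry of v_p^* v_q is [(p, q) = (i, j)] because P
   vanishes on the first r rows; this gives the linear independence. *)

Section Adjoint.
Variables (C : numClosedFieldType) (m n : nat).

Lemma adjmx0 : adjmx (0 : 'M[C]_(m, n)) = 0.
Proof. by rewrite /adjmx raddf0 trmx0. Qed.

Lemma adjmxD (A B : 'M[C]_(m, n)) : adjmx (A + B) = adjmx A + adjmx B.
Proof. by rewrite /adjmx map_mxD linearD. Qed.

Lemma adjmx_sum (I : Type) (s : seq I) (P : pred I) (F : I -> 'M[C]_(m, n)) :
  adjmx (\sum_(i <- s | P i) F i) = \sum_(i <- s | P i) adjmx (F i).
Proof. exact: (big_morph _ adjmxD adjmx0). Qed.

Lemma adjmxMn (A : 'M[C]_(m, n)) k : adjmx (A *+ k) = adjmx A *+ k.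
Proof. by elim: k => [|k IHk]; rewrite ?mulr0n ?adjmx0 // !mulrS adjmxD IHk. Qed.

Lemma adjmx_delta (i : 'I_m) (j : 'I_n) :
  adjmx (delta_mx i j : 'M[C]_(m, n)) = delta_mx j i.
Proof. by rewrite /adjmx map_delta_mx trmx_delta. Qed.

End Adjoint.

Lemma mx_lin_indep_entries (C : numClosedFieldType) (p q : nat) (I : finType)
    (F : I -> 'M[C]_(p, q)) (row_of : I -> 'I_p) (col_of : I -> 'I_q) :
  (forall i j, F i (row_of j) (col_of j) = (i == j)%:R) -> mx_lin_indep F.
Proof.
move=> Fdelta c sum0 j.
have := congr1 (fun M : 'M[C]_(p, q) => M (row_of j) (col_of j)) sum0.
rewrite summxE mxE => <-.
rewrite (bigD1 j) //= mxE Fdelta eqxx mulr1 big1 ?addr0 // => i /negbTE ij.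
by rewrite mxE Fdelta ij mulr0.
Qed.

Section Construction.
Variables (C : numClosedFieldType) (n m r : nat).
Hypotheses (r_gt0 : (0 < r)%N) (le_rn : (r <= n)%N) (le_nm : (n <= m)%N).

Local Notation wr := (widen_ord le_rn).
Local Notation wn := (widen_ord le_nm).
Let k0 : 'I_r := Ordinal r_gt0.
Let top : 'I_m := wn (wr k0).

Definition tail_embedding : 'M[C]_(m, n) :=
  \sum_(b < n | (r <= b)%N) delta_mx (wn b) b.

Definition tail_projection : 'M[C]_n := \sum_(b < n | (r <= b)%N) delta_mx b b.

Definition frame_tuple (k : 'I_r) : 'M[C]_(m, n) :=
  delta_mx top (wr k) + tail_embedding *+ (k == k0).

Lemma top_notin_tail (b : 'I_n) : (r <= b)%N -> top != wn b.
Proof. by move=> le_rb; rewrite -val_eqE /= neq_ltn (leq_trans r_gt0 le_rb). Qed.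

Lemma delta_top_mul_tail p (i : 'I_p) : delta_mx i top *m tail_embedding = 0.
Proof.
rewrite /tail_embedding mulmx_sumr big1 // => b le_rb.
by rewrite mul_delta_mx_cond (negbTE (top_notin_tail _ le_rb)).
Qed.

Lemma adj_tail_mul_delta_top p (j : 'I_p) :
  adjmx tail_embedding *m delta_mx top j = 0.
Proof.
rewrite /tail_embedding adjmx_sum mulmx_suml big1 // => b le_rb.
by rewrite adjmx_delta mul_delta_mx_cond eq_sym (negbTE (top_notin_tail _ le_rb)).
Qed.

Lemma adj_tail_mul_tail : adjmx tail_embedding *m tail_embedding = tail_projection.
Proof.
rewrite /tail_embedding adjmx_sum mulmx_suml; apply: eq_bigr => b le_rb.
rewrite adjmx_delta mulmx_sumr (bigD1 b) //= mul_delta_mx big1 ?addr0 //.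
move=> c /andP[_ cb].
by rewrite mul_delta_mx_cond -val_eqE /= val_eqE eq_sym (negbTE cb).
Qed.

Lemma tail_projection_head (i j : 'I_n) : (i < r)%N -> tail_projection i j = 0.
Proof.
move=> lt_ir; rewrite summxE big1 // => b le_rb; rewrite mxE.
suff /negbTE -> : i != b by [].
by apply: contraTneq lt_ir => ->; rewrite -leqNgt.
Qed.

Lemma adjmx_frame_mul (i j : 'I_r) :
  adjmx (frame_tuple i) *m frame_tuple j =
  delta_mx (wr i) (wr j) + tail_projection *+ ((i == k0) && (j == k0)).
Proof.
rewrite /frame_tuple adjmxD adjmxMn adjmx_delta mulmxDl !mulmxDr mul_delta_mx.
by case: (i == k0); case: (j == k0);
  rewrite /= ?mulr0n ?mulr1n ?mulmx0 ?mul0mx ?delta_top_mul_tail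
    ?adj_tail_mul_delta_top ?adj_tail_mul_tail ?addr0 ?add0r.
Qed.

Lemma sum_adjmx_frame_mul :
  \sum_(k < r) adjmx (frame_tuple k) *m frame_tuple k = 1%:M.
Proof.
have sum_tail : \sum_(k < r) tail_projection *+ (k == k0) = tail_projection.
  by rewrite (bigD1 k0) //= big1 ?addr0 // => k /negbTE ->.
under eq_bigr do rewrite adjmx_frame_mul andbb.
rewrite big_split /= sum_tail mx1_sum_delta (bigID (fun b : 'I_n => (b < r)%N)) /=.
rewrite big_ord_narrow; congr (_ + _).
by apply: eq_bigl => b; rewrite -leqNgt.
Qed.

Lemma frame_mul_lin_indep :
  mx_lin_indep (fun ij : 'I_r * 'I_r =>
    adjmx (frame_tuple ij.1) *m frame_tuple ij.2).
Proof.
apply: (@mx_lin_indep_entries _ _ _ _ _ (fun ij => wr ij.1) (fun ij => wr ij.2)).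
move=> [i j] [p q] /=.
rewrite adjmx_frame_mul mxE mulmxnE (tail_projection_head (wr p) _ (ltn_ord p)).
rewrite mul0rn addr0 mxE.
by rewrite -!val_eqE /= !val_eqE xpair_eqE !(eq_sym p) !(eq_sym q).
Qed.

End Construction.

Theorem lemma5p2 (C : numClosedFieldType) (n m r : nat)
  (hr : (1 <= r)%N) (hrn : (r <= n)%N) (hnm : (n <= m)%N) :
  exists v : 'I_r -> 'M[C]_(m, n),
    \sum_(k < r) adjmx (v k) *m v k = 1%:M /\
    mx_lin_indep (fun ij : 'I_r * 'I_r => adjmx (v ij.1) *m v ij.2).
Proof.
exists (@frame_tuple C n m r hr hrn hnm).
by split; [exact: sum_adjmx_frame_mul | exact: frame_mul_lin_indep].
Qed.
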